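(* Consider the nearest-neighbor graph $\mathcal{G}^\mu_{x(k)}$ for a positive integer $\mu$, and algorithms in $\mathcal{A}^*_{\rm ave}$. (i) If $n\le\mu+1$, every algorithm in $\mathcal{A}^*_{\rm ave}$ achieves global finite-time consensus. (ii) If $n>\mu+1$, every algorithm in $\mathcal{A}^*_{\rm ave}$ fails to achieve finite-time consensus for Lebesgue-almost every initial value $x^0\in\mathbb{R}^n$. (iii) If $n>\mu+1$ and the sequence $\{\alpha_k\}$ is monotone (non-decreasing or non-increasing), the algorithm achieves global asymptotic consensus.
   Context: Nodes $\mathcal{V}=\{1,\dots,n\}$, $n\ge3$, states $x_i(k)\in\mathbb{R}$, discrete time. The class $\mathcal{A}^*_{\rm ave}$ consists of the updates $$x_i(k+1)=\alpha_k\min_{j\in\mathcal{N}_i(k)}x_j(k)+(1-\alpha_k)\max_{j\in\mathcal{N}_i(k)}x_j(k)$$ with node-independent parameters $\alpha_k\in(0,1)$ for all $k$; here $\mathcal{N}_i(k)=\{i\}\cup\mathcal{N}_i^-(k)\cup\mathcal{N}_i^+(k)$. Nearest-neighbor graph $\mathcal{G}^\mu_{x(k)}$: $\mathcal{N}_i^-(k)$ is a set of $\min(\mu,|\{j:x_j(k)<x_i(k)\}|)$ nodes $j$ with $x_j(k)<x_i(k)$ whose values are closest to $x_i(k)$ among such nodes (ties broken arbitrarily), and $\mathcal{N}_i^+(k)$ is defined symmetrically from $\{j: x_j(k)>x_i(k)\}$. The iteration starts at time $k_0\ge0$ with $x(k_0)=x^0$. Finite-time consensus for $x^0$: there exist $z_*$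 and an integer $T_*$ with $x_i(T_* )=z_*$ for all $i$; asymptotic consensus: there is $z_*$ with $x_i(k)\to z_*$ for all $i$; ''global'' means for all $k_0$ and all $x^0\in\mathbb{R}^n$. *)

From Stdlib Require Import Reals.
From mathcomp Require Import all_boot.
Set Implicit Arguments. Unset Strict Implicit. Unset Printing Implicit Defensive.

Open Scope R_scope.

Definition state (n : nat) := 'I_n -> R.

Definition ltRb (a b : R) : bool := if Rlt_dec a b then true else false.

Definition lower_ok (n mu : nat) (x : state n) (i : 'I_n) (S : {set 'I_n}) : Prop :=
  #|S| = minn mu #|[set j | ltRb (x j) (x i)]| /\
  (forall j, j \in S -> x j < x i) /\
  (forall j j', j \in S -> x j' < x i -> j' \notin S -> x j' <= x j).

Definition upper_ok (n mu : nat) (x : state n) (i : 'I_n) (S : {set 'I_n}) : Prop :=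
  #|S| = minn mu #|[set j | ltRb (x i) (x j)]| /\
  (forall j, j \in S -> x i < x j) /\
  (forall j j', j \in S -> x i < x j' -> j' \notin S -> x j <= x j').

(* A neighbor-selection (tie-breaking) policy: at time k and state x, node i
   gets (N_i^-(k), N_i^+(k)). *)
Definition policy (n : nat) := nat -> state n -> 'I_n -> {set 'I_n} * {set 'I_n}.

Definition policy_ok (n mu : nat) (sel : policy n) : Prop :=
  forall k x i, lower_ok mu x i (sel k x i).1 /\ upper_ok mu x i (sel k x i).2.

Definition nbhd (n : nat) (i : 'I_n) (p : {set 'I_n} * {set 'I_n}) : {set 'I_n} :=
  [set i] :|: p.1 :|: p.2.

Definition minN (n : nat) (x : state n) (i : 'I_n) (N : {set 'I_n}) : R :=
  \big[Rmin/x i]_(j in N) x j.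
Definition maxN (n : nat) (x : state n) (i : 'I_n) (N : {set 'I_n}) : R :=
  \big[Rmax/x i]_(j in N) x j.

Definition step (n : nat) (alpha : nat -> R) (sel : policy n) (k : nat) (x : state n)
  : state n :=
  fun i => let N := nbhd i (sel k x i) in
           alpha k * minN x i N + (1 - alpha k) * maxN x i N.

(* traj alpha sel k0 x0 m = x(k0 + m), with x(k0) = x0 *)
Fixpoint traj (n : nat) (alpha : nat -> R) (sel : policy n) (k0 : nat) (x0 : state n)
  (m : nat) : state n :=
  match m with
  | O => x0
  | S m' => step alpha sel (k0 + m') (traj alpha sel k0 x0 m')
  end.

Definition alpha_ok (alpha : nat -> R) : Prop := forall k, 0 < alpha k < 1.

Definition monotone_seq (alpha : nat -> R) : Prop :=
  (forall k, alpha k <= alpha (S k)) \/ (forall k, alpha (S k) <= alpha k).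

Definition finite_time_consensus (n : nat) (x : nat -> state n) : Prop :=
  exists (z : R) (T : nat), forall i, x T i = z.

Definition asymptotic_consensus (n : nat) (x : nat -> state n) : Prop :=
  exists z : R, forall i, Un_cv (fun m => x m i) z.

Definition box_vol (n : nat) (a b : state n) : R :=
  \big[Rmult/1]_(i < n) (b i - a i).

Definition lebesgue_null (n : nat) (P : state n -> Prop) : Prop :=
  forall eps, 0 < eps ->
  exists a b : nat -> state n,
    (forall m i, a m i <= b m i) /\
    (forall x, P x -> exists m, forall i, a m i <= x i <= b m i) /\
    (forall N, sum_f_R0 (fun m => box_vol (a m) (b m)) N <= eps).

(* Node i moves to alpha_k * (least value it sees) + (1 - alpha_k) * (largest
   value it sees), where it sees itself and its mu nearest neighbours below
   and above.
   - Order facts: a node sees every value below (above) it as soon as at most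
     mu values lie there, so the largest value a node sees is monotone in its
     own value (nbmax_mono); the smallest one too (nbmin_mono), by the order
     reversal x |-> -x, which swaps min and max and alpha and 1 - alpha.
   - (i) If n <= mu + 1 every node sees the global minimum and maximum, so all
     nodes agree after one step.
   - (ii) If n > mu + 1 and the initial values are pairwise distinct, the
     minimal node a and the node b of rank mu + 1 are "separated" forever, so
     a never joins the others: consensus forces a tie in x0, and the states
     with a tie form a Lebesgue-null set (a countable union of bounded pieces
     of hyperplanes, each covered by thin slabs).
   - (iii) Values stay in the initial range, and if a <= alpha_k the set of
     nodes below a moving threshold gains a node per step, so every n - 1
     steps the range shrinks by the factor 1 - a^(n-1); geometric shrinking
     yields a common limit.  A non-decreasing alpha is bounded below by
     alpha_0; a non-increasing one is handled by the mirrored system. *)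

From HB Require Import structures.
From Stdlib Require Import Reals Lra Lia Psatz Classical ClassicalEpsilon FunctionalExtensionality.
From mathcomp Require Import all_boot zify.
Set Implicit Arguments. Unset Strict Implicit. Unset Printing Implicit Defensive.
Open Scope R_scope.

(* Rmin and Rmax are commutative semigroup laws, so that the generic bigop
   lemmas (bigD1 in particular) apply to minN and maxN. *)
#[warnings="-redundant-canonical-projection"]
HB.instance Definition _ := SemiGroup.isComLaw.Build R Rmin Rmin_assoc Rmin_comm.
#[warnings="-redundant-canonical-projection"]
HB.instance Definition _ := SemiGroup.isComLaw.Build R Rmax Rmax_assoc Rmax_comm.

Lemma ltRbP a b : reflect (a < b) (ltRb a b).
Proof. by rewrite /ltRb; case: Rlt_dec => h; constructor. Qed.

Definition leRb (a b : R) : bool := if Rle_dec a b then true else false.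

Lemma leRbP a b : reflect (a <= b) (leRb a b).
Proof. by rewrite /leRb; case: Rle_dec => h; constructor. Qed.

Section NeighbourhoodExtrema.
Variables (n : nat) (x : state n) (i : 'I_n) (N : {set 'I_n}).

Lemma minN_le j : j \in N -> minN x i N <= x j.
Proof. by move=> jN; rewrite /minN (bigD1 j) //=; apply: Rmin_l. Qed.

Lemma maxN_ge j : j \in N -> x j <= maxN x i N.
Proof. by move=> jN; rewrite /maxN (bigD1 j) //=; apply: Rmax_l. Qed.

Lemma minN_self : minN x i N <= x i.
Proof.
by rewrite /minN; elim/big_rec: _ => [|j v _ hv]; [lra | have := Rmin_r (x j) v; lra].
Qed.

Lemma maxN_self : x i <= maxN x i N.
Proof.
by rewrite /maxN; elim/big_rec: _ => [|j v _ hv]; [lra | have := Rmax_r (x j) v; lra].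
Qed.

Lemma minN_attained : minN x i N = x i \/ exists2 j, j \in N & minN x i N = x j.
Proof.
rewrite /minN; elim/big_rec: _ => [|j v jN hv]; first by left.
case: (Rle_dec (x j) v) => h; first by right; exists j => //; rewrite Rmin_left.
by rewrite Rmin_right; [exact: hv | lra].
Qed.

Lemma maxN_attained : maxN x i N = x i \/ exists2 j, j \in N & maxN x i N = x j.
Proof.
rewrite /maxN; elim/big_rec: _ => [|j v jN hv]; first by left.
case: (Rle_dec v (x j)) => h; first by right; exists j => //; rewrite Rmax_left.
by rewrite Rmax_right; [exact: hv | lra].
Qed.

Lemma minN_ge c : c <= x i -> (forall j, j \in N -> c <= x j) -> c <= minN x i N.
Proof. by move=> h1 h2; case: minN_attained => [->|[j /h2 h ->]]. Qed.

Lemma minN_gt c : c < x i -> (forall j, j \in N -> c < x j) -> c < minN x i N.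
Proof. by move=> h1 h2; case: minN_attained => [->|[j /h2 h ->]]. Qed.

Lemma maxN_le c : x i <= c -> (forall j, j \in N -> x j <= c) -> maxN x i N <= c.
Proof. by move=> h1 h2; case: maxN_attained => [->|[j /h2 h ->]]. Qed.

End NeighbourhoodExtrema.

Definition lowerN n (sel : policy n) k (x : state n) i := (sel k x i).1.
Definition upperN n (sel : policy n) k (x : state n) i := (sel k x i).2.
Definition below n (x : state n) (i : 'I_n) := [set j | ltRb (x j) (x i)].
Definition above n (x : state n) (i : 'I_n) := [set j | ltRb (x i) (x j)].

Definition nbmin n (sel : policy n) k (x : state n) i := minN x i (nbhd i (sel k x i)).
Definition nbmax n (sel : policy n) k (x : state n) i := maxN x i (nbhd i (sel k x i)).

Lemma step_eq n (alpha : nat -> R) (sel : policy n) k (x : state n) i :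
  step alpha sel k x i = alpha k * nbmin sel k x i + (1 - alpha k) * nbmax sel k x i.
Proof. by []. Qed.

Lemma in_nbhd n (i : 'I_n) (p : {set 'I_n} * {set 'I_n}) j :
  (j \in nbhd i p) = [|| j == i, j \in p.1 | j \in p.2].
Proof. by rewrite /nbhd !inE orbA. Qed.

Lemma sub_card_mem (T : finType) (A B : {set T}) :
  A \subset B -> (#|B| <= #|A|)%N -> forall y, y \in B -> y \in A.
Proof. by move=> sAB cBA; have /eqP -> : A == B by rewrite eqEcard sAB cBA. Qed.

Section NearestNeighbours.
Variables (n mu : nat) (sel : policy n) (hsel : policy_ok mu sel) (k : nat) (x : state n).

Local Notation Lw := (lowerN sel k x).
Local Notation Up := (upperN sel k x).

Lemma lowerN_card i : #|Lw i| = minn mu #|below x i|.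
Proof. by case: (hsel k x i) => [[h _] _]. Qed.
Lemma upperN_card i : #|Up i| = minn mu #|above x i|.
Proof. by case: (hsel k x i) => [_ [h _]]. Qed.
Lemma lowerN_lt i j : j \in Lw i -> x j < x i.
Proof. by case: (hsel k x i) => [[_ [h _]] _]; apply: h. Qed.
Lemma upperN_gt i j : j \in Up i -> x i < x j.
Proof. by case: (hsel k x i) => [_ [_ [h _]]]; apply: h. Qed.
Lemma lowerN_closest i j j' : j \in Lw i -> x j' < x i -> j' \notin Lw i -> x j' <= x j.
Proof. by case: (hsel k x i) => [[_ [_ h]] _]; apply: h. Qed.
Lemma upperN_closest i j j' : j \in Up i -> x i < x j' -> j' \notin Up i -> x j <= x j'.
Proof. by case: (hsel k x i) => [_ [_ [_ h]]]; apply: h. Qed.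

Lemma lowerN_sub i : Lw i \subset below x i.
Proof. by apply/subsetP => j /lowerN_lt h; rewrite inE; apply/ltRbP. Qed.
Lemma upperN_sub i : Up i \subset above x i.
Proof. by apply/subsetP => j /upperN_gt h; rewrite inE; apply/ltRbP. Qed.

Lemma lowerN_full i j : (#|below x i| <= mu)%N -> x j < x i -> j \in Lw i.
Proof.
move=> hc hj; apply: (sub_card_mem (lowerN_sub i)); last by rewrite inE; apply/ltRbP.
by rewrite lowerN_card; move/minn_idPr: hc => ->.
Qed.

Lemma upperN_full i j : (#|above x i| <= mu)%N -> x i < x j -> j \in Up i.
Proof.
move=> hc hj; apply: (sub_card_mem (upperN_sub i)); last by rewrite inE; apply/ltRbP.
by rewrite upperN_card; move/minn_idPr: hc => ->.
Qed.

Lemma nbmin_le i j : j \in nbhd i (sel k x i) -> nbmin sel k x i <= x j.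
Proof. exact: minN_le. Qed.
Lemma nbmax_ge i j : j \in nbhd i (sel k x i) -> x j <= nbmax sel k x i.
Proof. exact: maxN_ge. Qed.
Lemma nbmin_self i : nbmin sel k x i <= x i. Proof. exact: minN_self. Qed.
Lemma nbmax_self i : x i <= nbmax sel k x i. Proof. exact: maxN_self. Qed.

Lemma lowerN_nbhd i j : j \in Lw i -> j \in nbhd i (sel k x i).
Proof. by rewrite in_nbhd => ->; rewrite orbT. Qed.
Lemma upperN_nbhd i j : j \in Up i -> j \in nbhd i (sel k x i).
Proof. by rewrite in_nbhd => ->; rewrite !orbT. Qed.

(* The largest value seen is monotone in the node's own value: if node j
   sees less above itself than node i does, it sees all mu nearest upper
   neighbours of i plus one more, contradicting #|Up i| <= mu. *)
Lemma nbmax_mono i j : x i <= x j -> nbmax sel k x i <= nbmax sel k x j.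
Proof.
move=> hij; apply: Rnot_lt_le => hlt.
have hj := nbmax_self j.
case: (maxN_attained x i (nbhd i (sel k x i))) => [h|[s sN h]];
  rewrite -/(nbmax sel k x i) in h; rewrite h in hlt; first lra.
move: sN; rewrite in_nbhd => /or3P [/eqP si|sL|sU]; first by rewrite si in hlt; lra.
  by have := lowerN_lt sL; lra.
have his := upperN_gt sU.
have sUj : s \notin Up j.
  by apply/negP => /upperN_nbhd /nbmax_ge; lra.
case: (leqP #|above x j| mu) => hc; first by move/negP: sUj; apply; apply: upperN_full => //; lra.
have cUj : #|Up j| = mu by rewrite upperN_card; apply/minn_idPl; apply: ltnW.
have sub : s |: Up j \subset Up i.
  apply/subsetP => u; rewrite !inE => /orP [/eqP -> //|uU].
  have hu1 := upperN_gt uU.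
  have hu2 := nbmax_ge (upperN_nbhd uU).
  apply/negPn/negP => uUi.
  by have := upperN_closest sU (j' := u) ltac:(lra) uUi; lra.
have := subset_leq_card sub; rewrite cardsU1 sUj cUj upperN_card.
by have := geq_minl mu #|above x i|; lia.
Qed.

End NearestNeighbours.

(* Order reversal x |-> -x exchanges lower and upper neighbours, min and
   max, and alpha and 1 - alpha; every statement about the lower end of the
   state therefore has a mirror image at the upper end. *)
Definition neg n (x : state n) : state n := fun i => - x i.

Definition dual_policy n (sel : policy n) : policy n :=
  fun k x i => ((sel k (neg x) i).2, (sel k (neg x) i).1).

Lemma neg_neg n (x : state n) : neg (neg x) = x.
Proof. by apply: functional_extensionality => i; rewrite /neg Ropp_involutive. Qed.

Lemma below_neg n (x : state n) i : below (neg x) i = above x i.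
Proof. by apply/setP => j; rewrite !inE; apply/ltRbP/ltRbP; rewrite /neg; lra. Qed.

Lemma above_neg n (x : state n) i : above (neg x) i = below x i.
Proof. by rewrite -below_neg neg_neg. Qed.

Lemma dual_policy_ok n mu (sel : policy n) : policy_ok mu sel -> policy_ok mu (dual_policy sel).
Proof.
move=> hsel k x i; case: (hsel k (neg x) i) => [[cL [ltL clL]] [cU [gtU clU]]].
rewrite /dual_policy /=; split; (split; [|split]).
- by rewrite cU -/(above (neg x) i) above_neg.
- by move=> j /gtU; rewrite /neg; lra.
- by move=> j j' jS hj' j'S; have := clU j j' jS ltac:(rewrite /neg; lra) j'S; rewrite /neg; lra.
- by rewrite cL -/(below (neg x) i) below_neg.
- by move=> j /ltL; rewrite /neg; lra.
- by move=> j j' jS hj' j'S; have := clL j j' jS ltac:(rewrite /neg; lra) j'S; rewrite /neg; lra.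
Qed.

Lemma nbhd_dual n (sel : policy n) k (x : state n) i :
  nbhd i (dual_policy sel k (neg x) i) = nbhd i (sel k x i).
Proof. by rewrite /dual_policy neg_neg /nbhd /= setUAC. Qed.

Lemma minN_neg n (x : state n) i N : minN (neg x) i N = - maxN x i N.
Proof. by rewrite /minN /maxN (big_morph Ropp Ropp_Rmax (erefl (- x i))). Qed.

Lemma nbmin_dual n (sel : policy n) k (x : state n) i :
  nbmin sel k x i = - nbmax (dual_policy sel) k (neg x) i.
Proof. by rewrite /nbmin /nbmax nbhd_dual -minN_neg neg_neg. Qed.

Lemma nbmax_dual n (sel : policy n) k (x : state n) i :
  nbmax sel k x i = - nbmin (dual_policy sel) k (neg x) i.
Proof. by rewrite /nbmin /nbmax nbhd_dual minN_neg Ropp_involutive. Qed.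

Lemma traj_dual n (alpha : nat -> R) (sel : policy n) k0 (x0 : state n) m :
  traj alpha sel k0 x0 m =
  neg (traj (fun k => 1 - alpha k) (dual_policy sel) k0 (neg x0) m).
Proof.
elim: m => [|m IH] /=; first by rewrite neg_neg.
apply: functional_extensionality => i.
rewrite IH step_eq (nbmin_dual sel) (nbmax_dual sel) neg_neg /neg -/(neg x0) step_eq; lra.
Qed.

Lemma nbmin_mono n mu (sel : policy n) (hsel : policy_ok mu sel) k (x : state n) i j :
  x i <= x j -> nbmin sel k x i <= nbmin sel k x j.
Proof.
move=> hij; rewrite !nbmin_dual.
suff : nbmax (dual_policy sel) k (neg x) j <= nbmax (dual_policy sel) k (neg x) i by lra.
by apply: (nbmax_mono (dual_policy_ok hsel)); rewrite /neg; lra.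
Qed.

Lemma exists_argmin n (x : state n) (O : {set 'I_n}) i0 : i0 \in O ->
  exists2 j, j \in O & forall o, o \in O -> x j <= x o.
Proof.
move=> i0O; case: (minN_attained x i0 O) => [h|[j jO h]].
  by exists i0 => // o oO; rewrite -h; apply: minN_le.
by exists j => // o oO; rewrite -h; apply: minN_le.
Qed.

Lemma exists_argmax n (x : state n) (O : {set 'I_n}) i0 : i0 \in O ->
  exists2 j, j \in O & forall o, o \in O -> x o <= x j.
Proof.
move=> i0O; case: (maxN_attained x i0 O) => [h|[j jO h]].
  by exists i0 => // o oO; rewrite -h; apply: maxN_ge.
by exists j => // o oO; rewrite -h; apply: maxN_ge.
Qed.

Lemma card_notin n (S : {set 'I_n}) i : i \notin S -> (#|S| < n)%N.
Proof.
move=> iS; rewrite -[n in (_ < n)%N]card_ord -cardsT; apply: proper_card.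
by rewrite properT; apply: contraNneq iS => ->; rewrite inE.
Qed.

Lemma exists_notin n (S : {set 'I_n}) : (#|S| < n)%N -> exists o, o \notin S.
Proof.
move=> hS; apply: NNPP => hall.
have : [set: 'I_n] \subset S.
  by apply/subsetP => o _; apply/negPn/negP => oS; apply: hall; exists o.
by move/subset_leq_card; rewrite cardsT card_ord; lia.
Qed.

(* Part (i).  If n <= mu + 1, every node sees all nodes with a value other
   than its own, so all nodes compute the same global min and max and agree
   after one step. *)
Section CompleteGraph.
Variables (n mu : nat) (sel : policy n) (hsel : policy_ok mu sel) (hn : (n <= mu.+1)%N).

Lemma nbhd_extremes k (x : state n) i j : nbmin sel k x i <= x j <= nbmax sel k x i.
Proof.
have small (S : {set 'I_n}) : i \notin S -> (#|S| <= mu)%N by move=> iS; have := card_notin iS; lia.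
have := nbmin_self sel k x i; have := nbmax_self sel k x i.
case: (Rtotal_order (x j) (x i)) => [h|[h|h]] h1 h2.
- split; last lra.
  apply/nbmin_le/lowerN_nbhd/(lowerN_full hsel) => //.
  by apply: small; rewrite inE; apply/ltRbP; lra.
- lra.
- split; first lra.
  apply/nbmax_ge/upperN_nbhd/(upperN_full hsel) => //.
  by apply: small; rewrite inE; apply/ltRbP; lra.
Qed.

(* All nodes share the same extremes, hence the same next value. *)
Lemma step_constant alpha k (x : state n) i i' : step alpha sel k x i = step alpha sel k x i'.
Proof.
have ext p q : nbmin sel k x p <= nbmin sel k x q /\ nbmax sel k x q <= nbmax sel k x p.
  rewrite /nbmin /nbmax; split.
    case: (minN_attained x q (nbhd q (sel k x q))) => [->|[j _ ->]].
      by case: (nbhd_extremes k x p q).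
    by case: (nbhd_extremes k x p j).
  case: (maxN_attained x q (nbhd q (sel k x q))) => [->|[j _ ->]].
    by case: (nbhd_extremes k x p q).
  by case: (nbhd_extremes k x p j).
have [e1 e2] := ext i i'; have [e3 e4] := ext i' i.
by rewrite !step_eq (Rle_antisym _ _ e1 e3) (Rle_antisym _ _ e4 e2).
Qed.
End CompleteGraph.

Lemma complete_graph_consensus n mu (hn0 : (0 < n)%N) (hn : (n <= mu.+1)%N)
    (alpha : nat -> R) (sel : policy n) :
  policy_ok mu sel -> forall k0 (x0 : state n), finite_time_consensus (traj alpha sel k0 x0).
Proof.
move=> hsel k0 x0; pose i0 := Ordinal hn0.
by exists (traj alpha sel k0 x0 1 i0), 1%N => i; apply: (step_constant hsel hn).
Qed.

(* The invariant: node a holds the strict minimum and exactly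
   mu + 1 nodes have values <= x b.  Node a then only sees nodes <= x b, while
   every other node sees a value > x b, so a stays the strict minimum; and
   the mu + 1 lowest nodes cannot be overtaken by the others. *)
Definition separated n mu (x : state n) (a b : 'I_n) :=
  (forall j, j != a -> x a < x j) /\ #|[set j | leRb (x j) (x b)]| = mu.+1.

Section SeparatedStep.
Variables (n mu : nat) (sel : policy n) (hsel : policy_ok mu sel) (k : nat) (x : state n).
Variables (alpha : nat -> R) (ha : 0 < alpha k < 1) (hmu : (1 <= mu)%N) (hn : (mu.+1 < n)%N).
Variables (a b : 'I_n) (hsep : separated mu x a b).

Local Notation Lw := (lowerN sel k x).
Local Notation Up := (upperN sel k x).
Let B := [set j | leRb (x j) (x b)].

Let inB j : (j \in B) = leRb (x j) (x b). Proof. by rewrite inE. Qed.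
Let B_card : #|B| = mu.+1. Proof. by case: hsep. Qed.
Let a_min j : j != a -> x a < x j. Proof. by case: hsep => h _; apply: h. Qed.
Let a_min_le j : x a <= x j.
Proof. by case: (eqVneq j a) => [->|/a_min]; lra. Qed.

Let a_in_B : a \in B. Proof. by rewrite inB; apply/leRbP. Qed.

Let b_neq_a : b != a.
Proof.
apply/eqP => ba.
have : B \subset [set a].
  apply/subsetP => j; rewrite inB inE => /leRbP hj; apply/negPn/negP => /a_min.
  by rewrite -ba; lra.
by move/subset_leq_card; rewrite cards1 B_card; lia.
Qed.

Let xa_lt_xb : x a < x b. Proof. exact: a_min b_neq_a. Qed.

Let Ba_card : #|B :\ a| = mu.
Proof. by have := cardsD1 a B; rewrite a_in_B B_card add1n => -[]. Qed.

Let exists_above_b : exists c, x b < x c.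
Proof.
have [c cB] := @exists_notin n B ltac:(rewrite B_card; lia).
by exists c; apply: Rnot_le_lt => /leRbP; rewrite -inB; apply/negP.
Qed.

(* The mu nodes of B other than a are exactly the nearest upper
   neighbours of a; so a sees nothing above x b. *)
Let upperN_a u : u \in Up a -> x u <= x b.
Proof.
move=> uU; apply: Rnot_lt_le => hu.
have sub : u |: (B :\ a) \subset Up a.
  apply/subsetP => o; rewrite !inE => /orP [/eqP -> //|/andP [oa /leRbP ob]].
  apply/negPn/negP => oU.
  by have := upperN_closest hsel uU (j' := o) (a_min oa) oU; lra.
have uB : u \notin B :\ a by rewrite !inE; apply/negP => /andP [_ /leRbP]; lra.
have := subset_leq_card sub; rewrite cardsU1 uB Ba_card (upperN_card hsel).
by have := geq_minl mu #|above x a|; lia.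
Qed.

Let nbmin_a : nbmin sel k x a = x a.
Proof.
apply: Rle_antisym; first exact: nbmin_self.
by apply: minN_ge => [|j _]; [lra | apply: a_min_le].
Qed.

Let nbmax_a : nbmax sel k x a <= x b.
Proof.
have xab := xa_lt_xb; apply: maxN_le => [|j]; first lra.
rewrite in_nbhd => /or3P [/eqP ->|jL|jU]; first lra.
  by have := lowerN_lt hsel jL; have := a_min_le j; lra.
exact: upperN_a.
Qed.

(* Any node j != a sees a value above x b: otherwise all its upper
   neighbours lie in B, fewer than mu of them, so it sees everything above
   itself, including a node above x b. *)
Let nbmax_other j : j != a -> x b < nbmax sel k x j.
Proof.
move=> ja; case: (Rlt_le_dec (x b) (x j)) => hj; first by have := nbmax_self sel k x j; lra.
apply: Rnot_le_lt => hM.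
have jB : j \in B :\ a by rewrite !inE ja; apply/leRbP.
have sub : Up j \subset (B :\ a) :\ j.
  apply/subsetP => u uU; have hu := upperN_gt hsel uU.
  have hu2 := nbmax_ge (upperN_nbhd uU).
  rewrite !inE; apply/and3P; split.
  - by apply/negP => /eqP ej; rewrite ej in hu; lra.
  - by apply/negP => /eqP ea; rewrite ea in hu; have := a_min_le j; lra.
  - by apply/leRbP; lra.
have hsmall : (#|Up j| < mu)%N.
  have := subset_leq_card sub; have := cardsD1 j (B :\ a); rewrite jB Ba_card add1n.
  by set q := #|_ :\ j|; lia.
have [c hc] := exists_above_b.
have cU : c \in Up j.
  apply: (upperN_full hsel); last lra.
  by move: hsmall; rewrite (upperN_card hsel); lia.
by have := nbmax_ge (upperN_nbhd cU); lra.
Qed.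

(* b has at most mu nodes below it, so it sees a. *)
Let nbmin_b : nbmin sel k x b <= x a.
Proof.
apply/nbmin_le/lowerN_nbhd/(lowerN_full hsel); last exact: xa_lt_xb.
have sub : below x b \subset B :\ b.
  apply/subsetP => o; rewrite !inE => /ltRbP ho; apply/andP; split; last by apply/leRbP; lra.
  by apply/negP => /eqP e; rewrite e in ho; lra.
have := subset_leq_card sub; have := cardsD1 b B; rewrite inB.
have -> : leRb (x b) (x b) by apply/leRbP; lra.
by rewrite B_card; lia.
Qed.

(* A node above x b does not see a: the mu + 1 nodes of B would all have
   to be among its at most mu lower neighbours. *)
Let nbmin_high j : x b < x j -> x a < nbmin sel k x j.
Proof.
move=> hj; have xab := xa_lt_xb.
have aL : a \notin Lw j.
  apply/negP => aL.
  have sub : B \subset Lw j.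
    apply/subsetP => o; rewrite inB => /leRbP ho; apply/negPn/negP => oL.
    have := lowerN_closest hsel aL (j' := o) ltac:(lra) oL => h.
    case: (eqVneq o a) => [e|oa]; first by rewrite e aL in oL.
    by have := a_min oa; lra.
  have := subset_leq_card sub; rewrite B_card (lowerN_card hsel).
  by have := geq_minl mu #|below x j|; lia.
apply: minN_gt => [|u]; first lra.
rewrite in_nbhd => /or3P [/eqP ->|uL|uU]; first lra.
  by apply: a_min; apply: contraNneq aL => <-.
by have := upperN_gt hsel uU; lra.
Qed.

Lemma separated_step : separated mu (step alpha sel k x) a b.
Proof.
split.
  move=> j ja; rewrite !step_eq nbmin_a.
  have h1 : x a <= nbmin sel k x j by apply: minN_ge => [|u _]; apply: a_min_le.
  have h2 := nbmax_other ja.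
  by have := nbmax_a; nra.
rewrite -B_card; apply: eq_card => j; rewrite !inE.
apply/leRbP/leRbP; rewrite !step_eq => h.
  apply: Rnot_lt_le => hj.
  have h1 := nbmin_high hj; have h2 := nbmax_mono hsel k (Rlt_le _ _ hj).
  by have := nbmin_b; nra.
have h1 := nbmin_mono hsel k h; have h2 := nbmax_mono hsel k h.
by nra.
Qed.

End SeparatedStep.

Lemma separated_traj n mu (alpha : nat -> R) (sel : policy n) k0 (x0 : state n) a b :
  alpha_ok alpha -> policy_ok mu sel -> (1 <= mu)%N -> (mu.+1 < n)%N ->
  separated mu x0 a b -> forall m, separated mu (traj alpha sel k0 x0 m) a b.
Proof.
move=> ha hsel hmu hn h0; elim=> [|m IH] //=.
exact: (separated_step hsel (ha _) hmu hn IH).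
Qed.

Definition rank n (x : state n) (i : 'I_n) := #|[set j | leRb (x j) (x i)]|.

(* With pairwise distinct values, every rank 1..n is attained: the rank is
   an injection of the n nodes into {1, ..., n}. *)
Lemma rank_surj n (x : state n) : injective x ->
  forall r, (1 <= r <= n)%N -> exists b, rank x b = r.
Proof.
case: n x => [|n] x xinj r hr; first by lia.
have rank_range i : (0 < rank x i <= n.+1)%N.
  apply/andP; split; last by rewrite -[X in (_ <= X)%N]card_ord; apply: max_card.
  by apply/card_gt0P; exists i; rewrite inE; apply/leRbP; lra.
have rank_lt i j : x i < x j -> (rank x i < rank x j)%N.
  move=> hij; apply: proper_card; apply/properP; split.
    by apply/subsetP => o; rewrite !inE => /leRbP h; apply/leRbP; lra.
  exists j; rewrite !inE; first by apply/leRbP; lra.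
  by apply/negP => /leRbP; lra.
pose f (i : 'I_n.+1) : 'I_n.+1 := inord (rank x i).-1.
have val_f i : val (f i) = (rank x i).-1 by rewrite /f /= inordK //; have := rank_range i; lia.
have finj : injective f.
  move=> i j /(congr1 val); rewrite !val_f => e.
  have := rank_range i; have := rank_range j.
  case: (Rtotal_order (x i) (x j)) => [/rank_lt|[/xinj -> //|/rank_lt]]; lia.
have [g _ gf] := injF_bij finj.
exists (g (inord r.-1)); have := congr1 val (gf (inord r.-1)).
by rewrite val_f /= inordK; have := rank_range (g (inord r.-1)); lia.
Qed.

(* If the initial values are pairwise distinct, take a the minimal node and
   b the node of rank mu + 1: the pair is separated forever, so node a never
   meets the others. *)
Lemma consensus_forces_tie n mu (alpha : nat -> R) (sel : policy n) k0 (x0 : state n) :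
  alpha_ok alpha -> policy_ok mu sel -> (1 <= mu)%N -> (mu.+1 < n)%N ->
  finite_time_consensus (traj alpha sel k0 x0) -> exists i j, i != j /\ x0 i = x0 j.
Proof.
move=> ha hsel hmu hn [z [T hT]].
apply: NNPP => hdist.
have xinj : injective x0.
  by move=> i j e; case: (eqVneq i j) => // ij; exfalso; apply: hdist; exists i, j.
have i0 : 'I_n by exists 0%N; lia.
have [a _ amin] := exists_argmin x0 (in_setT i0).
have [b hb] := rank_surj xinj (r := mu.+1) ltac:(lia).
have sep0 : separated mu x0 a b.
  split=> // j ja; have := amin j (in_setT j).
  by case/Rle_lt_or_eq_dec => // /xinj ej; move: ja; rewrite ej eqxx.
have [j] := @exists_notin n [set a] ltac:(rewrite cards1; lia).
rewrite inE => ja.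
have [sepT _] := separated_traj k0 ha hsel hmu hn sep0 T.
by have := sepT j ja; rewrite !hT; lra.
Qed.

(* Null sets are closed under subsets and countable
   unions; a bounded piece of a hyperplane x_i = x_j is null, since it is
   covered by L thin boxes of width 2K/L in the two coordinates i and j. *)

Lemma sum_f_R0_mono (u : nat -> R) N M : (forall m, 0 <= u m) -> (N <= M)%N ->
  sum_f_R0 u N <= sum_f_R0 u M.
Proof.
move=> h /subnK <-; elim: (M - N)%N => [|d IH]; first by rewrite add0n; lra.
by rewrite addSn /=; have := h (d + N).+1; lra.
Qed.

Lemma sum_f_R0_even_odd (u : nat -> R) r :
  sum_f_R0 u r.*2.+1 = sum_f_R0 (fun m => u m.*2) r + sum_f_R0 (fun m => u m.*2.+1) r.
Proof. by elim: r => [|r IH] //=; rewrite doubleS /=; move: IH => /= IH; lra. Qed.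

Lemma sum_f_R0_support (u : nat -> R) (L : nat) c0 N : 0 <= c0 ->
  (forall m, 0 <= u m) -> (forall m, (L <= m)%N -> u m = 0) -> (forall m, u m <= c0) ->
  sum_f_R0 u N <= INR L * c0.
Proof.
move=> hc h0 hz hle.
suff hs : sum_f_R0 u N <= INR (minn N.+1 L) * c0.
  apply: (Rle_trans _ _ _ hs); apply: Rmult_le_compat_r => //.
  by apply: le_INR; apply/leP; rewrite geq_minr.
elim: N => [|N IH] /=.
  case: (leqP L 0) => hL; last by rewrite (minn_idPl hL) /=; have := hle 0%N; lra.
  by rewrite hz //; have := pos_INR (minn 1 L); nra.
case: (leqP L N.+1) => hL.
  rewrite hz // Rplus_0_r; apply: (Rle_trans _ _ _ IH); apply: Rmult_le_compat_r => //.
  by apply: le_INR; apply/leP; lia.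
have -> : minn N.+2 L = (minn N.+1 L).+1 by lia.
by rewrite S_INR; have := hle N.+1; lra.
Qed.

(* The dyadic enumeration of N x N: code k r = 2^k (2r + 1) - 1, decoded
   by stripping trailing ones of the binary expansion (with enough fuel). *)
Fixpoint dyadic_code (k r : nat) : nat :=
  match k with O => r.*2 | S k' => (dyadic_code k' r).*2.+1 end.

Fixpoint dyadic_decode (fuel k m : nat) : nat * nat :=
  match fuel with
  | O => (k, m)
  | S f => if odd m then dyadic_decode f k.+1 m./2 else (k, m./2)
  end.

Lemma dyadic_decode_S f k m :
  dyadic_decode f.+1 k m = if odd m then dyadic_decode f k.+1 m./2 else (k, m./2).
Proof. by []. Qed.

Lemma dyadic_decode_fuel f f' k m : (m < f)%N -> (m < f')%N ->
  dyadic_decode f k m = dyadic_decode f' k m.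
Proof.
elim: f f' k m => [|g IH] [|g'] k m //= h1 h2.
by case om: (odd m) => //; apply: IH; have := odd_double_half m; rewrite om; lia.
Qed.

Lemma dyadic_decode_code k r j f : (dyadic_code k r < f)%N ->
  dyadic_decode f j (dyadic_code k r) = (j + k, r)%N.
Proof.
elim: k j f => [|k IH] j [|f] //=; first by rewrite odd_double doubleK addn0.
move=> h; rewrite /= odd_double /= uphalf_double IH ?addSnnS //; lia.
Qed.

Lemma half_double_succ e : (e.*2.+1)./2 = e.
Proof. by rewrite -add1n (half_bit_double e true). Qed.

Lemma Rmult_assoc_ssr : associative Rmult.
Proof. by move=> *; rewrite Rmult_assoc. Qed.
#[warnings="-redundant-canonical-projection"]
HB.instance Definition _ :=
  Monoid.isComLaw.Build R 1 Rmult Rmult_assoc_ssr Rmult_comm Rmult_1_l.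

Section NullSets.
Variable n : nat.

Lemma box_vol_ge0 (a b : state n) : (forall i, a i <= b i) -> 0 <= box_vol a b.
Proof.
move=> h; apply: (big_ind (fun v => 0 <= v)); [lra | by move=> *; nra |].
by move=> i _; have := h i; lra.
Qed.

Lemma box_vol_point (i : 'I_n) (c : state n) : box_vol c c = 0.
Proof. by rewrite /box_vol (bigD1 i) //= Rminus_diag Rmult_0_l. Qed.

Lemma null_mono (P Q : state n -> Prop) :
  (forall x, P x -> Q x) -> lebesgue_null Q -> lebesgue_null P.
Proof.
move=> hPQ hQ eps he; have [a [b [h1 [h2 h3]]]] := hQ eps he.
by exists a, b; split=> //; split=> // x /hPQ; apply: h2.
Qed.

Lemma null_empty (i : 'I_n) : lebesgue_null (fun _ : state n => False).
Proof.
move=> eps he; exists (fun _ _ => 0), (fun _ _ => 0); split; first by move=> *; lra.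
split=> // N; rewrite (@PartSum.sum_eq _ (fun _ => 0)); last by move=> *; apply: box_vol_point.
by elim: N => [|N IH] /=; lra.
Qed.

(* Volumes along the dyadic enumeration: if the k-th sequence v k has
   partial sums <= e / 2^(k+1), the enumeration started at level k has
   partial sums <= e / 2^k, since it interleaves v k with the enumeration
   started at level k + 1. *)
Lemma dyadic_sum_bound (v : nat -> nat -> R) (e : R) :
  0 < e -> (forall k r, 0 <= v k r) -> (forall k N, sum_f_R0 (v k) N <= e / 2 ^ k.+1) ->
  forall N k, sum_f_R0 (fun m => v (dyadic_decode m.+1 k m).1 (dyadic_decode m.+1 k m).2) N
              <= e / 2 ^ k.
Proof.
move=> he v0 v_sum.
pose W k m := v (dyadic_decode m.+1 k m).1 (dyadic_decode m.+1 k m).2.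
have W0 k m : 0 <= W k m by apply: v0.
have W_even k r : W k r.*2 = v k r by rewrite /W /= odd_double doubleK.
have W_odd k r : W k r.*2.+1 = W k.+1 r.
  rewrite /W dyadic_decode_S oddS odd_double half_double_succ.
  by rewrite (@dyadic_decode_fuel r.*2.+1 r.+1) //; lia.
suff W_sum N k : sum_f_R0 (W k) N <= e / 2 ^ k by [].
elim/ltn_ind: N k => N IH k.
have hk1 : 0 < e / 2 ^ k.+1 by apply: Rdiv_lt_0_compat => //; apply: pow_lt; lra.
have e2 : e / 2 ^ k.+1 + e / 2 ^ k.+1 = e / 2 ^ k by rewrite /=; field; apply: pow_nonzero; lra.
case: N IH => [|N] IH.
  by rewrite /= -[0%N]/(0.*2)%N W_even; have := v_sum k 0%N; simpl sum_f_R0; lra.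
pose r := (N.+1)./2.
have hr : (N.+1 <= r.*2.+1)%N by have := odd_double_half N.+1; rewrite /r; case: odd; lia.
have hrN : (r < N.+1)%N by have := odd_double_half N.+1; rewrite /r; case: odd; lia.
apply: (Rle_trans _ _ _ (sum_f_R0_mono (W0 k) hr)).
rewrite sum_f_R0_even_odd (@PartSum.sum_eq _ (v k)); last by move=> i _; apply: W_even.
rewrite (@PartSum.sum_eq (fun m => W k m.*2.+1) (W k.+1)); last by move=> i _; apply: W_odd.
by have := IH r hrN k.+1; have := v_sum k r; rewrite -e2 /=; lra.
Qed.

(* Countable unions: cover the k-th null set with total volume
   eps / 2^(k+1) and enumerate all the boxes along the dyadic enumeration. *)
Lemma null_union (P : nat -> state n -> Prop) :
  (forall k, lebesgue_null (P k)) -> lebesgue_null (fun x => exists k, P k x).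
Proof.
move=> hP eps he.
have heps k : 0 < eps / 2 ^ k.+1 by apply: Rdiv_lt_0_compat => //; apply: pow_lt; lra.
have hk k : exists ab : (nat -> state n) * (nat -> state n),
   (forall m i, ab.1 m i <= ab.2 m i) /\
   (forall x, P k x -> exists m, forall i, ab.1 m i <= x i <= ab.2 m i) /\
   (forall N, sum_f_R0 (fun m => box_vol (ab.1 m) (ab.2 m)) N <= eps / 2 ^ k.+1).
  by have [a [b H]] := hP k _ (heps k); exists (a, b).
pose AB k := proj1_sig (constructive_indefinite_description _ (hk k)).
have HAB k : _ := proj2_sig (constructive_indefinite_description _ (hk k)).
have AB_le k m i : (AB k).1 m i <= (AB k).2 m i by case: (HAB k) => h _; apply: h.
pose D m := dyadic_decode m.+1 0 m.
exists (fun m => (AB (D m).1).1 (D m).2), (fun m => (AB (D m).1).2 (D m).2).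
split; first by move=> m i; apply: AB_le.
split.
  move=> x [k Pk]; have [_ [cover _]] := HAB k; have [r hr] := cover x Pk.
  by exists (dyadic_code k r); rewrite /D dyadic_decode_code.
move=> N; rewrite -[eps]Rdiv_1_r -[1]/(2 ^ 0).
apply: (@dyadic_sum_bound (fun k r => box_vol ((AB k).1 r) ((AB k).2 r))) => //.
- by move=> k r; apply: box_vol_ge0 => i; apply: AB_le.
- by move=> k; case: (HAB k) => _ [_ h].
Qed.

Lemma null_union_fin (i0 : 'I_n) (P : 'I_n -> state n -> Prop) :
  (forall i, lebesgue_null (P i)) -> lebesgue_null (fun x => exists i, P i x).
Proof.
move=> hP.
apply: (@null_mono _ (fun x => exists k : nat, exists i : 'I_n, nat_of_ord i = k /\ P i x)).
  by move=> x [i Pi]; exists (nat_of_ord i), i.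
apply: null_union => k; case: (ltnP k n) => hk.
  apply: (null_mono _ (hP (Ordinal hk))) => x [i [ik Pi]].
  by have -> : Ordinal hk = i by apply: val_inj; rewrite /= ik.
apply: (null_mono _ (null_empty i0)) => x [i [ik _]].
by move: (ltn_ord i); rewrite ik; lia.
Qed.

Lemma prod_le_pow (T : eqType) (r : seq T) (P : pred T) (F : T -> R) C :
  1 <= C -> (forall l, 0 <= F l <= C) ->
  0 <= \big[Rmult/1]_(l <- r | P l) F l <= C ^ size r.
Proof.
move=> hC hF; elim: r => [|a r IH]; first by rewrite big_nil /=; lra.
have : 0 <= C ^ size r by apply: pow_le; lra.
by rewrite big_cons /=; have := hF a; case: (P a) => h; split; nra.
Qed.

Lemma unit_interval_pick (L : nat) s : (1 <= L)%N -> 0 <= s <= INR L ->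
  exists c, (c < L)%N /\ INR c <= s <= INR c + 1.
Proof.
elim: L s => [|L IH] s // _ hs.
case: (leqP L 0) => hL.
  have L0 : L = 0%N by lia.
  by subst L; exists 0%N; split=> //; simpl in hs |- *; lra.
case: (Rle_lt_dec s (INR L)) => h.
  by have [c [hc hc2]] := IH s hL ltac:(lra); exists c; split=> //; lia.
by exists L; split=> //; move: hs; rewrite S_INR; lra.
Qed.

(* The slab covering of {x | x i = x j, |x| <= K}: for c < L, box c is
   [-K, K]^n except that coordinates i and j range over the c-th of L
   intervals of length h subdividing [-K, -K + L h]. *)
Section Slabs.
Variables (i j : 'I_n) (K h : R) (L : nat).

Let on_diag (l : 'I_n) := (l == i) || (l == j).

Definition slab_lo (c : nat) (l : 'I_n) : R :=
  if (c < L)%N then (if on_diag l then -K + INR c * h else -K) else 0.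
Definition slab_hi (c : nat) (l : 'I_n) : R :=
  if (c < L)%N then (if on_diag l then -K + (INR c + 1) * h else K) else 0.

Hypotheses (ij : i != j) (hK : 0 < K) (hh : 0 < h).

Lemma slab_le c l : slab_lo c l <= slab_hi c l.
Proof. by rewrite /slab_lo /slab_hi; case: (c < L)%N; [case: (on_diag l) |]; nra. Qed.

Lemma slab_cover (x : state n) : INR L * h = 2 * K ->
  x i = x j -> (forall l, -K <= x l <= K) ->
  exists c, forall l, slab_lo c l <= x l <= slab_hi c l.
Proof.
move=> hLh xij xK; have [xi1 xi2] := xK i.
have L_pos : (0 < L)%N by case: L hLh => // /= hLh; exfalso; lra.
pose s := (x i + K) / h.
have s_ge0 : 0 <= s by apply: Rmult_le_pos; [lra | apply/Rlt_le/Rinv_0_lt_compat].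
have s_le : s <= INR L.
  have -> : INR L = 2 * K / h by rewrite -hLh; field; lra.
  by apply: Rmult_le_compat_r; [apply/Rlt_le/Rinv_0_lt_compat | lra].
have [c [cL [c1 c2]]] : exists c, (c < L)%N /\ INR c <= s <= INR c + 1.
  exact: unit_interval_pick.
exists c => l; rewrite /slab_lo /slab_hi cL.
have es : s * h = x i + K by rewrite /s; field; lra.
have t1 : INR c * h <= x i + K by rewrite -es; apply: Rmult_le_compat_r; lra.
have t2 : x i + K <= (INR c + 1) * h by rewrite -es; apply: Rmult_le_compat_r; lra.
case: (boolP (on_diag l)) => [/orP [/eqP -> | /eqP ->] | _]; rewrite -?xij; [lra | lra | exact: xK].
Qed.

Lemma slab_vol_out c : (L <= c)%N -> box_vol (slab_lo c) (slab_hi c) = 0.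
Proof.
move=> hc; rewrite /box_vol (bigD1 i) //= /slab_lo /slab_hi.
have -> : (c < L)%N = false by lia.
by rewrite Rminus_diag Rmult_0_l.
Qed.

(* Coordinates i and j contribute width h each, the others at most C. *)
Lemma slab_vol c C : h <= 2 * K -> 2 * K <= C -> 1 <= C ->
  box_vol (slab_lo c) (slab_hi c) <= h * h * C ^ n.
Proof.
move=> hh2 hC2 hC1; have hCn : 0 < C ^ n by apply: pow_lt; lra.
case: (leqP L c) => hc; first by rewrite slab_vol_out //; have := Rmult_le_pos h h; nra.
have width l : 0 <= slab_hi c l - slab_lo c l <= C.
  by rewrite /slab_lo /slab_hi hc; case: (on_diag l); lra.
rewrite /box_vol (bigD1 i) // (bigD1 j) /=; last by rewrite eq_sym.
have [p1 p2] := @prod_le_pow _ (index_enum 'I_n) (fun l => (l != i) && (l != j)) _ C hC1 width.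
have sz : size (index_enum 'I_n) = n by rewrite [index_enum _]unlock -enumT -cardE card_ord.
rewrite {}sz in p2.
have -> : slab_hi c i - slab_lo c i = h by rewrite /slab_lo /slab_hi hc /on_diag eqxx /=; ring.
have -> : slab_hi c j - slab_lo c j = h by rewrite /slab_lo /slab_hi hc /on_diag eqxx orbT /=; ring.
move: p1 p2; set Q := \big[Rmult/1]_(l <- _ | _) _ => p1 p2.
by have := Rmult_le_pos h h; nra.
Qed.

End Slabs.

(* A bounded piece of a hyperplane x_i = x_j: with L slabs of width
   h = 2K / L the total volume is at most L h^2 C^n = 4 K^2 C^n / L. *)
Lemma null_piece (i j : 'I_n) (K : R) : i != j -> 0 < K ->
  lebesgue_null (fun x : state n => x i = x j /\ forall l, -K <= x l <= K).
Proof.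
move=> ij hK eps he.
pose C := Rmax (2 * K) 1.
have hC1 : 1 <= C by apply: Rmax_r.
have hC2 : 2 * K <= C by apply: Rmax_l.
have hCn : 0 < C ^ n by apply: pow_lt; lra.
have [L hL] := INR_unbounded (4 * K * K * C ^ n / eps).
have hq : 0 <= 4 * K * K * C ^ n / eps.
  by apply: Rmult_le_pos; [nra | apply/Rlt_le/Rinv_0_lt_compat].
have hLp : 0 < INR L by lra.
pose h := 2 * K / INR L.
have hh : 0 < h by apply: Rdiv_lt_0_compat; lra.
have hLh : INR L * h = 2 * K by rewrite /h; field; lra.
have hh2 : h <= 2 * K.
  have L0 : (0 < L)%N by apply/ltP; apply: INR_lt; rewrite /=; lra.
  have L1 : 1 <= INR L by apply: (le_INR 1); apply/leP.
  by nra.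
exists (slab_lo i j K h L), (slab_hi i j K h L); split; first exact: slab_le.
split; first by move=> x [xij xK]; apply: slab_cover.
move=> N; apply: (Rle_trans _ (INR L * (h * h * C ^ n))).
  apply: sum_f_R0_support.
  - by have := Rmult_le_pos h h; nra.
  - by move=> m; apply/box_vol_ge0/slab_le.
  - by move=> m; apply: slab_vol_out.
  - by move=> m; apply: slab_vol.
have -> : INR L * (h * h * C ^ n) = 4 * K * K * C ^ n / INR L by rewrite /h; field; lra.
apply: (Rmult_le_reg_r (INR L)) => //; rewrite /Rdiv Rmult_assoc Rinv_l; last lra.
have := Rmult_lt_compat_r eps _ _ he hL; rewrite /Rdiv Rmult_assoc Rinv_l; lra.
Qed.

(* The set of states with a repeated value is null: it is the countable
   union, over bounds K and pairs i != j, of the pieces above. *)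
Lemma null_ties (i0 : 'I_n) :
  lebesgue_null (fun x : state n => exists i j, i != j /\ x i = x j).
Proof.
apply: (@null_mono _ (fun x => exists K : nat, exists i, exists j,
   (i != j /\ x i = x j /\ forall l, -(INR K + 1) <= x l <= INR K + 1))).
  move=> x [i [j [ij e]]].
  have [m0 _ hm0] := exists_argmin x (in_setT i0).
  have [m1 _ hm1] := exists_argmax x (in_setT i0).
  have [K hK] := INR_unbounded (Rabs (x m0) + Rabs (x m1)).
  exists K, i, j; do 2!split=> //; move=> l.
  have := hm0 l (in_setT l); have := hm1 l (in_setT l).
  have := Rabs_pos (x m0); have := Rabs_pos (x m1).
  by have := Rle_abs (x m1); have := Rle_abs (- x m0); rewrite Rabs_Ropp; lra.
apply: null_union => K; apply: (null_union_fin i0) => i; apply: (null_union_fin i0) => j.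
case: (eqVneq i j) => [<-|ij].
  by apply: (null_mono _ (null_empty i0)) => x [].
apply: (@null_mono _ (fun x : state n => x i = x j /\ forall l, -(INR K + 1) <= x l <= INR K + 1)).
  by move=> x [_ h].
by apply: null_piece => //; have := pos_INR K; lra.
Qed.

End NullSets.

Lemma finite_consensus_null n mu (hmu : (1 <= mu)%N) (hn : (mu.+1 < n)%N)
    (alpha : nat -> R) (sel : policy n) :
  alpha_ok alpha -> policy_ok mu sel -> forall k0,
  lebesgue_null (fun x0 : state n => finite_time_consensus (traj alpha sel k0 x0)).
Proof.
move=> ha hsel k0; have i0 : 'I_n by exists 0%N; lia.
by apply: (null_mono _ (null_ties i0)) => x0; apply: consensus_forces_tie.
Qed.

(* All values stay in the initial range, and with
   a <= alpha_k, over n - 1 steps the range shrinks by the factor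
   1 - a^(n-1): the set of nodes below the moving threshold
   hi - a^t (hi - min) gains a node at every step. *)
Definition in_range n (x : state n) lo hi := forall j, lo <= x j <= hi.

Definition sublevel n (x : state n) (c : R) := [set i | leRb (x i) c].

Lemma step_in_range n (alpha : nat -> R) (sel : policy n) k (x : state n) lo hi :
  0 <= alpha k <= 1 -> in_range x lo hi -> in_range (step alpha sel k x) lo hi.
Proof.
move=> ha h i; rewrite step_eq.
have h1 : lo <= nbmin sel k x i by apply: minN_ge => [|j _]; [have := h i | have := h j]; lra.
have h2 : nbmax sel k x i <= hi by apply: maxN_le => [|j _]; [have := h i | have := h j]; lra.
by have := nbmin_self sel k x i; have := nbmax_self sel k x i; nra.
Qed.

Lemma traj_in_range n (alpha : nat -> R) (sel : policy n) k0 (x0 : state n) :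
  alpha_ok alpha -> forall s lo hi, in_range (traj alpha sel k0 x0 s) lo hi ->
  forall d, in_range (traj alpha sel k0 x0 (s + d)) lo hi.
Proof.
move=> ha s lo hi h; elim=> [|d IH]; first by rewrite addn0.
by rewrite addnS /=; apply: step_in_range => //; have := ha (k0 + (s + d))%N; lra.
Qed.

Section SublevelGrowth.
Variables (n mu : nat) (sel : policy n) (hsel : policy_ok mu sel) (hmu : (1 <= mu)%N).
Variables (alpha : nat -> R) (k : nat) (y : state n) (a hi thr : R).
Hypotheses (ha : 0 < a <= alpha k) (ha1 : alpha k < 1) (yhi : forall j, y j <= hi).

(* Trading weight from max to min only lowers the new value. *)
Lemma step_le_lower_weight i : step alpha sel k y i <= a * nbmin sel k y i + (1 - a) * hi.
Proof.
rewrite step_eq.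
have h2 : nbmax sel k y i <= hi by apply: maxN_le => [|j _]; apply: yhi.
by have := nbmin_self sel k y i; have := nbmax_self sel k y i; nra.
Qed.

(* The lowest node above the threshold has a lower neighbour below it. *)
Lemma lowest_above_thr : (exists s0, y s0 <= thr) -> (exists o, thr < y o) ->
  exists j, thr < y j /\ nbmin sel k y j <= thr.
Proof.
move=> [s0 hs0] [o ho].
have oO : o \in [set j | ~~ leRb (y j) thr] by rewrite inE; apply/negP => /leRbP; lra.
have [j jO hj] := exists_argmin y oO.
have yj : thr < y j by move: jO; rewrite inE => /leRbP; lra.
exists j; split=> //.
have : (0 < #|lowerN sel k y j|)%N.
  rewrite (lowerN_card hsel) leq_min hmu /=.
  by apply/card_gt0P; exists s0; rewrite inE; apply/ltRbP; lra.
move/card_gt0P => [u uL]; have hu := lowerN_lt hsel uL.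
have := nbmin_le (lowerN_nbhd uL).
suff : y u <= thr by lra.
apply: Rnot_lt_le => hu2.
have : u \in [set j | ~~ leRb (y j) thr] by rewrite inE; apply/negP => /leRbP; lra.
by move/hj; lra.
Qed.

Lemma sublevel_grows : (0 < #|sublevel y thr|)%N ->
  (minn n #|sublevel y thr|.+1 <= #|sublevel (step alpha sel k y) (a * thr + (1 - a) * hi)|)%N.
Proof.
move=> hS; set S := sublevel y thr; set S' := sublevel _ _.
have in_S' i : nbmin sel k y i <= thr -> i \in S'.
  by move=> hi'; rewrite inE; apply/leRbP; have := step_le_lower_weight i; nra.
have sub : S \subset S'.
  by apply/subsetP => i; rewrite inE => /leRbP hi'; apply: in_S'; have := nbmin_self sel k y i; lra.
case: (ltnP #|S| n) => hSn; last by have := subset_leq_card sub; lia.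
have [o oS] := exists_notin hSn; have [s0 s0S] := card_gt0P hS.
have below_thr : exists s0, y s0 <= thr by exists s0; move: s0S; rewrite inE => /leRbP.
have above_thr : exists o, thr < y o.
  by exists o; apply: Rnot_le_lt => ho; move/negP: oS; apply; rewrite inE; apply/leRbP.
have [j [hj1 hj2]] := lowest_above_thr below_thr above_thr.
have jS : j \notin S by rewrite inE; apply/negP => /leRbP; lra.
have sub2 : j |: S \subset S'.
  apply/subsetP => i; rewrite in_setU1 => /orP [/eqP -> | iS]; first exact: in_S'.
  exact: (subsetP sub).
by have := subset_leq_card sub2; rewrite cardsU1 jS add1n; lia.
Qed.

End SublevelGrowth.

(* Invariant along t steps: values in [m0, hi] (m0 the initial minimum), and
   at least min(n, t + 1) nodes below hi - a^t (hi - m0). *)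
Lemma range_contracts n mu (sel : policy n) (alpha : nat -> R) k0 (x0 : state n) a :
  policy_ok mu sel -> (1 <= mu)%N -> (0 < n)%N -> alpha_ok alpha ->
  0 < a -> (forall k, a <= alpha k) ->
  forall s lo hi, in_range (traj alpha sel k0 x0 s) lo hi ->
  exists lo' hi', in_range (traj alpha sel k0 x0 (s + n.-1)) lo' hi' /\
                  hi' - lo' <= (1 - a ^ n.-1) * (hi - lo).
Proof.
move=> hsel hmu hn halpha ha hA s lo hi h.
set X := traj alpha sel k0 x0 in h *.
have a1 : a < 1 by have := hA 0%N; have := halpha 0%N; lra.
have [am _ ham] := exists_argmin (X s) (in_setT (Ordinal hn)).
set m0 := X s am in ham *.
have claim t : in_range (X (s + t)%N) m0 hi /\
               (minn n t.+1 <= #|sublevel (X (s + t)%N) (hi - a ^ t * (hi - m0))|)%N.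
  elim: t => [|t [IH1 IH2]].
    rewrite addn0; split; first by move=> j; have := h j; have := ham j (in_setT j); lra.
    apply: (@leq_trans 1); first by rewrite geq_minr.
    apply/card_gt0P; exists am; rewrite inE; apply/leRbP; rewrite /= -/m0; lra.
  have hk := halpha (k0 + (s + t))%N; have ak := hA (k0 + (s + t))%N.
  rewrite addnS /X /= -/X; split; first by apply: step_in_range => //; lra.
  have -> : hi - a ^ t.+1 * (hi - m0) = a * (hi - a ^ t * (hi - m0)) + (1 - a) * hi.
    by rewrite /=; ring.
  apply: (leq_trans _ (sublevel_grows hsel hmu _ _ _ _)).
  - by lia.
  - by lra.
  - by lra.
  - by move=> j; have := IH1 j; lra.
  - by lia.
have [c1 c2] := claim n.-1.
exists m0, (hi - a ^ n.-1 * (hi - m0)); split.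
  move=> j; split; first by have := c1 j; lra.
  have all_in : sublevel (X (s + n.-1)%N) (hi - a ^ n.-1 * (hi - m0)) = setT.
    by apply/eqP; rewrite eqEcard subsetT cardsT card_ord; move: c2; rewrite prednK // minnn.
  by have := in_setT j; rewrite -all_in inE => /leRbP.
have : a ^ n.-1 <= 1 by rewrite -(pow1 n.-1); apply: pow_incr; lra.
have : lo <= m0 by have := h am; rewrite -/m0; lra.
have : 0 <= a ^ n.-1 by apply: pow_le; lra.
by nra.
Qed.

Lemma Rdist_in_range a b lo hi : lo <= a <= hi -> lo <= b <= hi -> Rdist a b <= hi - lo.
Proof. by rewrite /Rdist /Rabs; case: Rcase_abs => *; lra. Qed.

Lemma tail_spread_vanishes n (X : nat -> state n) (p : nat) (q : R) :
  0 <= q < 1 ->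
  (forall s lo hi, in_range (X s) lo hi -> forall d, in_range (X (s + d)%N) lo hi) ->
  (forall s lo hi, in_range (X s) lo hi -> exists lo' hi',
      in_range (X (s + p)%N) lo' hi' /\ hi' - lo' <= q * (hi - lo)) ->
  forall lo0 hi0, in_range (X 0%N) lo0 hi0 -> 0 <= hi0 - lo0 ->
  forall eps, 0 < eps -> exists N, forall m m' i i', (N <= m)%N -> (N <= m')%N ->
    Rdist (X m i) (X m' i') < eps.
Proof.
move=> hq hinv hcontr lo0 hi0 h0 hD eps he.
have iter r : exists lo hi, in_range (X (r * p)%N) lo hi /\ hi - lo <= q ^ r * (hi0 - lo0).
  elim: r => [|r [lo [hi [h1 h2]]]]; first by exists lo0, hi0; split=> //=; lra.
  have [lo' [hi' [h3 h4]]] := hcontr _ _ _ h1.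
  exists lo', hi'; split; first by rewrite mulSn addnC.
  by rewrite /=; have := Rmult_le_compat_l q _ _ (proj1 hq) h2; lra.
have [r hr] := pow_lt_1_zero q ltac:(rewrite Rabs_pos_eq; lra) (eps / (hi0 - lo0 + 1))
  ltac:(apply: Rdiv_lt_0_compat; lra).
have {}hr := hr r (Nat.le_refl r); rewrite Rabs_pos_eq in hr; last by apply: pow_le; lra.
have [lo [hi [h1 h2]]] := iter r.
exists (r * p)%N => m m' i i' hm hm'.
have := hinv _ _ _ h1 (m - r * p)%N i; rewrite subnKC //.
have := hinv _ _ _ h1 (m' - r * p)%N i'; rewrite subnKC // => b1 b2.
apply: (Rle_lt_trans _ _ _ (Rdist_in_range b2 b1)); apply: (Rle_lt_trans _ _ _ h2).
have : q ^ r * (hi0 - lo0 + 1) < eps.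
  have e : eps = eps / (hi0 - lo0 + 1) * (hi0 - lo0 + 1) by field; lra.
  by rewrite [X in _ < X]e; apply: Rmult_lt_compat_r => //; lra.
have : 0 <= q ^ r by apply: pow_le; lra.
by nra.
Qed.

(* A sequence of states whose tail spread vanishes reaches consensus: each
   coordinate is Cauchy, and all coordinates share the limit. *)
Lemma consensus_of_vanishing_spread n (i0 : 'I_n) (X : nat -> state n) :
  (forall eps, 0 < eps -> exists N, forall m m' i i', (N <= m)%N -> (N <= m')%N ->
    Rdist (X m i) (X m' i') < eps) ->
  asymptotic_consensus X.
Proof.
move=> small.
have [z hz] : {z | Un_cv (fun m => X m i0) z}.
  apply: R_complete => eps he; have [N hN] := small eps he.
  by exists N => m m' hm hm'; apply: hN; apply/leP.
exists z => i eps he.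
have [N1 hN1] := hz (eps / 2) ltac:(lra).
have [N2 hN2] := small (eps / 2) ltac:(lra).
exists (maxn N1 N2) => m /leP hm.
have := hN1 m ltac:(apply/leP; lia); have := hN2 m m i i0 ltac:(lia) ltac:(lia).
have := Rdist_tri (X m i) z (X m i0); rewrite (Rdist_sym (X m i0) z); lra.
Qed.

Lemma consensus_of_lower_bound n mu (sel : policy n) (alpha : nat -> R) a :
  (2 <= n)%N -> (1 <= mu)%N -> policy_ok mu sel -> alpha_ok alpha ->
  0 < a -> (forall k, a <= alpha k) ->
  forall k0 (x0 : state n), asymptotic_consensus (traj alpha sel k0 x0).
Proof.
move=> hn hmu hsel halpha ha hA k0 x0.
have hn0 : (0 < n)%N by lia.
have i0 := Ordinal hn0.
have a1 : a < 1 by have := hA 0%N; have := halpha 0%N; lra.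
have q_bound : 0 < a ^ n.-1 <= 1.
  by split; [apply: pow_lt | rewrite -(pow1 n.-1); apply: pow_incr]; lra.
have [am _ ham] := exists_argmin x0 (in_setT i0).
have [aM _ haM] := exists_argmax x0 (in_setT i0).
apply: (consensus_of_vanishing_spread i0).
apply: (@tail_spread_vanishes _ (traj alpha sel k0 x0) n.-1 (1 - a ^ n.-1) ltac:(lra)
          (traj_in_range halpha) (range_contracts hsel hmu hn0 halpha ha hA) (x0 am) (x0 aM)).
  by move=> j /=; split; [apply: ham | apply: haM].
by have := ham aM (in_setT aM); lra.
Qed.

(* For a monotone sequence alpha, alpha_0 or 1 - alpha_0 bounds it (resp.
   its mirror 1 - alpha) from below. *)
Lemma monotone_alpha_consensus n mu (hn : (2 <= n)%N) (hmu : (1 <= mu)%N)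
    (alpha : nat -> R) (sel : policy n) :
  alpha_ok alpha -> policy_ok mu sel -> monotone_seq alpha ->
  forall k0 (x0 : state n), asymptotic_consensus (traj alpha sel k0 x0).
Proof.
move=> ha hsel [incr|decr] k0 x0.
  apply: (consensus_of_lower_bound hn hmu hsel ha (a := alpha 0%N)); first by have := ha 0%N; lra.
  by elim=> [|k IH]; [lra | have := incr k; lra].
have ha' : alpha_ok (fun k => 1 - alpha k) by move=> k; have := ha k; lra.
have [z hz] := consensus_of_lower_bound hn hmu (dual_policy_ok hsel) ha' (a := 1 - alpha 0%N)
  ltac:(have := ha 0%N; lra) ltac:(elim=> [|k IH]; [lra | have := decr k; lra]) k0 (neg x0).
exists (- z) => i.
apply: (Un_cv_ext (fun m => - traj (fun k => 1 - alpha k) (dual_policy sel) k0 (neg x0) m i)).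
  by move=> m; rewrite (traj_dual alpha).
exact: CV_opp (hz i).
Qed.

Theorem theorem8 (n mu : nat) (hn : (3 <= n)%N) (hmu : (1 <= mu)%N) :
  ((n <= mu.+1)%N ->
     forall (alpha : nat -> R) (sel : policy n),
       alpha_ok alpha -> policy_ok mu sel ->
       forall (k0 : nat) (x0 : state n),
         finite_time_consensus (traj alpha sel k0 x0))
  /\
  ((mu.+1 < n)%N ->
     forall (alpha : nat -> R) (sel : policy n),
       alpha_ok alpha -> policy_ok mu sel ->
       forall k0 : nat,
         lebesgue_null (fun x0 : state n => finite_time_consensus (traj alpha sel k0 x0)))
  /\
  ((mu.+1 < n)%N ->
     forall (alpha : nat -> R) (sel : policy n),
       alpha_ok alpha -> policy_ok mu sel -> monotone_seq alpha ->
       forall (k0 : nat) (x0 : state n),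
         asymptotic_consensus (traj alpha sel k0 x0)).
Proof.
split; first by move=> hsmall alpha sel _; apply: complete_graph_consensus; lia.
split; first by move=> hlarge; apply: finite_consensus_null.
by move=> hlarge; apply: monotone_alpha_consensus; lia.
Qed.
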